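(* Let $p\in(0,1)$ and let $Y_1,Y_2,\dots$ be i.i.d. with $Y_i=1-\mathrm{Geo}(p)$. Let $f(x)=(2-x)^{2-x}p(1-p)^{1-x}(1-x)^{x-1}$ for $x\le1$ (with $0^0=1$). (a) There is an absolute constant $C$ such that for every $a\in[2-p^{-1},1]$ and every positive integer $m$, $\Pr[Y_1+\dots+Y_m\ge am]\le Cmf(a)^m$. (b) As $m\to\infty$, uniformly for all $a\in[0,1]$, $\Pr[Y_1+\dots+Y_m\ge am]\ge[f(a)-o(1)]^m$. (c) If $p\ge1/2$, then as $m\to\infty$, uniformly for all $a\in[0,2-\frac1p]$, $\Pr[Y_1+\dots+Y_m\ge am]\ge[1-o(1)]^m$.
   Context: $\mathrm{Geo}(p)$ has $\Pr[\mathrm{Geo}(p)=k]=(1-p)^kp$ for integers $k\ge0$. *)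

From Stdlib Require Import Reals.
From Coquelicot Require Import Coquelicot.
Open Scope R_scope.

Definition geo_pmf (p : R) (k : nat) : R := (1 - p) ^ k * p.

Definition conv (u v : nat -> R) (n : nat) : R :=
  sum_f_R0 (fun i => u i * v (n - i)%nat) n.

(* law of G_1 + ... + G_m for G_i i.i.d. Geo(p) (m-fold convolution) *)
Fixpoint geo_sum_pmf (p : R) (m : nat) : nat -> R :=
  match m with
  | O => fun n => if Nat.eqb n 0 then 1 else 0
  | S m' => conv (geo_pmf p) (geo_sum_pmf p m')
  end.

(* Pr[Y_1 + ... + Y_m >= a m] where Y_i = 1 - G_i, so
   Y_1 + ... + Y_m = m - (G_1 + ... + G_m). *)
Definition prob_sumY_ge (p : R) (m : nat) (a : R) : R :=
  Series (fun k => if Rle_dec (a * INR m) (INR m - INR k)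
                   then geo_sum_pmf p m k else 0).

(* real power b^e for b >= 0, with the convention 0^0 = 1 *)
Definition rpow0 (b e : R) : R :=
  if Req_EM_T b 0 then (if Req_EM_T e 0 then 1 else 0) else Rpower b e.

Definition fgeo (p x : R) : R :=
  rpow0 (2 - x) (2 - x) * p * rpow0 (1 - p) (1 - x) * rpow0 (1 - x) (x - 1).

From Stdlib Require Import Reals Lra Lia.
From Coquelicot Require Import Coquelicot.
Open Scope R_scope.

(* G = G_1 + ... + G_m is negative binomial, Pr[G = k] = C(k+m-1, k) p^m (1-p)^k, with
   generating function E[x^G] = (p / (1 - (1-p) x))^m, and Y_1 + ... + Y_m >= a m is the
   event G <= b m with b = 1 - a.  Write f(a) = exp (geo_rate p b).
   (a) Chernoff: Pr[G <= b m] <= x^(-b m) E[x^G] for 0 < x <= 1; the optimal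
   x = b / ((1+b)(1-p)) is admissible exactly when b <= 1/p - 1, i.e. a >= 2 - 1/p, and
   gives f(a)^m.
   (b) One term suffices: C(k+m, k) k^k m^m is the largest of the k+m+1 terms of the
   binomial expansion of (k+m)^(k+m), so C(k+m, k) >= (k+m)^(k+m) / (k^k m^m (k+m+1)) and
   Pr[G = k] >= exp (m geo_rate p (k/m)) / (6 m).  Taking k = floor (b m) costs a factor
   1 / (e^3 m), as geo_rate is Lipschitz up to a t ln t term.  The polynomial loss
   1 / (6 e^3 m^2) is absorbed into f - o(1); where f - o(1) < 0 one uses Pr >= p^m.
   (c) is (b) at b = 1/p - 1 (the mean of G/m), where geo_rate vanishes. *)

Local Notation binom := Binomial.C.

Lemma sum_f_R0_rev (f : nat -> R) n :
  sum_f_R0 (fun i => f (n - i)%nat) n = sum_f_R0 f n.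
Proof.
induction n as [|n IH]; [reflexivity|].
rewrite decomp_sum by lia. simpl pred.
rewrite (sum_eq _ (fun i => f (n - i)%nat)) by (intros; f_equal).
rewrite IH. simpl. ring.
Qed.

Lemma sum_binom_diag m n :
  sum_f_R0 (fun j => binom (j + m) j) n = binom (n + m + 1) n.
Proof.
induction n as [|n IH].
- simpl. rewrite !C_n_0. reflexivity.
- simpl sum_f_R0. rewrite IH.
  replace (S (n + m)) with (n + m + 1)%nat by lia.
  rewrite (pascal (n + m + 1) n) by lia; f_equal; lia.
Qed.

Lemma binom_pos n k : 0 <= binom n k.
Proof.
unfold Binomial.C. apply Rmult_le_pos; [apply pos_INR|].
apply Rlt_le, Rinv_0_lt_compat, Rmult_lt_0_compat; apply INR_fact_lt_0.
Qed.

Lemma conv_unit_r (u : nat -> R) k :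
  conv u (fun n => if Nat.eqb n 0 then 1 else 0) k = u k.
Proof.
unfold conv. destruct k as [|k].
- simpl. apply Rmult_1_r.
- simpl sum_f_R0. rewrite sum_eq_R0.
  + rewrite Nat.sub_diag. simpl. ring.
  + intros i Hi. cbv beta.
    destruct (Nat.eqb _ 0) eqn:E; [|apply Rmult_0_r].
    apply Nat.eqb_eq in E. destruct i; lia.
Qed.

Lemma geo_sum_pmf_S p m k :
  geo_sum_pmf p (S m) k = binom (k + m) k * p ^ S m * (1 - p) ^ k.
Proof.
revert k; induction m as [|m IH]; intro k.
- simpl geo_sum_pmf. rewrite conv_unit_r. unfold geo_pmf.
  rewrite Nat.add_0_r, C_n_n. ring.
- change (geo_sum_pmf p (S (S m)) k) with (conv (geo_pmf p) (geo_sum_pmf p (S m)) k).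
  unfold conv.
  rewrite (sum_eq _ (fun i => binom ((k - i) + m) (k - i) * (p ^ S (S m) * (1 - p) ^ k))).
  2:{ intros i Hi. rewrite IH. unfold geo_pmf.
      replace ((1 - p) ^ k) with ((1 - p) ^ i * (1 - p) ^ (k - i))
        by (rewrite <- pow_add; f_equal; lia).
      simpl. ring. }
  rewrite <- scal_sum, (sum_f_R0_rev (fun j => binom (j + m) j)), sum_binom_diag.
  replace (k + m + 1)%nat with (k + S m)%nat by lia. ring.
Qed.

Lemma geo_sum_pmf_S_0 p m : geo_sum_pmf p (S m) 0 = p ^ S m.
Proof. rewrite geo_sum_pmf_S, C_n_0. simpl. ring. Qed.

Lemma geo_sum_pmf_nonneg p m k : 0 < p < 1 -> 0 <= geo_sum_pmf p m k.
Proof.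
intro Hp. revert k; induction m as [|m IH]; intro k.
- simpl. destruct (Nat.eqb k 0); lra.
- simpl. unfold conv. apply cond_pos_sum. intro i.
  apply Rmult_le_pos; [|apply IH]. unfold geo_pmf.
  apply Rmult_le_pos; [apply pow_le|]; lra.
Qed.

Lemma ex_series_Rabs_nonneg (a : nat -> R) l :
  (forall n, 0 <= a n) -> is_series a l -> ex_series (fun n => Rabs (a n)).
Proof.
intros Ha H. apply ex_series_ext with a; [|exists l; exact H].
intro n. rewrite Rabs_pos_eq; auto.
Qed.

Lemma is_series_geo_pmf_gf p x : 0 < p < 1 -> 0 <= x <= 1 ->
  is_series (fun k => geo_pmf p k * x ^ k) (p / (1 - (1 - p) * x)).
Proof.
intros Hp Hx.
assert (Hq : Rabs ((1 - p) * x) < 1) by (rewrite Rabs_pos_eq; nra).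
eapply is_series_ext; [|exact (is_series_scal_l p _ _ (is_series_geom _ Hq))].
intro n. unfold geo_pmf, scal. simpl. unfold mult. simpl.
rewrite Rpow_mult_distr. ring.
Qed.

Lemma is_series_geo_sum_pmf_gf p m x : 0 < p < 1 -> 0 <= x <= 1 ->
  is_series (fun k => geo_sum_pmf p (S m) k * x ^ k) ((p / (1 - (1 - p) * x)) ^ S m).
Proof.
intros Hp Hx. pose proof (is_series_geo_pmf_gf p x Hp Hx) as G.
induction m as [|m IH].
- eapply is_series_ext; [|rewrite pow_1; exact G].
  intro n. simpl geo_sum_pmf. rewrite conv_unit_r. reflexivity.
- assert (Hg : forall n, 0 <= geo_pmf p n * x ^ n).
  { intro n. unfold geo_pmf. apply Rmult_le_pos; [apply Rmult_le_pos|]; try apply pow_le; lra. }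
  assert (Hs : forall n, 0 <= geo_sum_pmf p (S m) n * x ^ n).
  { intro n. apply Rmult_le_pos; [apply geo_sum_pmf_nonneg; auto|apply pow_le; lra]. }
  pose proof (is_series_mult _ _ _ _ G IH
    (ex_series_Rabs_nonneg _ _ Hg G) (ex_series_Rabs_nonneg _ _ Hs IH)) as H.
  rewrite <- tech_pow_Rmult.
  eapply is_series_ext; [|exact H].
  intro n. change (geo_sum_pmf p (S (S m)) n) with (conv (geo_pmf p) (geo_sum_pmf p (S m)) n).
  unfold conv. rewrite Rmult_comm, scal_sum. apply sum_eq. intros i Hi.
  replace (x ^ n) with (x ^ i * x ^ (n - i)) by (rewrite <- pow_add; f_equal; lia).
  ring.
Qed.

Lemma is_series_geo_sum_pmf p m : 0 < p < 1 ->
  is_series (geo_sum_pmf p (S m)) 1.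
Proof.
intro Hp. pose proof (is_series_geo_sum_pmf_gf p m 1 Hp ltac:(lra)) as H.
replace (p / (1 - (1 - p) * 1)) with 1 in H by (field; lra).
rewrite pow1 in H. eapply is_series_ext; [|exact H].
intro n. simpl. rewrite pow1. apply Rmult_1_r.
Qed.

Lemma pow_exp_ln x n : 0 < x -> x ^ n = exp (INR n * ln x).
Proof. intro Hx. rewrite <- ln_pow, exp_ln by (try apply pow_lt; auto). reflexivity. Qed.

Definition event_pmf p m a k :=
  if Rle_dec (a * INR m) (INR m - INR k) then geo_sum_pmf p m k else 0.

Lemma event_pmf_nonneg p m a k : 0 < p < 1 -> 0 <= event_pmf p m a k.
Proof. intro Hp. unfold event_pmf. destruct Rle_dec; [apply geo_sum_pmf_nonneg; auto|lra]. Qed.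

Lemma ex_series_event_pmf p m a : 0 < p < 1 -> ex_series (event_pmf p (S m) a).
Proof.
intro Hp. apply (@ex_series_le R_AbsRing R_CompleteNormedModule) with (b := geo_sum_pmf p (S m)).
- intro n. change (norm (event_pmf p (S m) a n)) with (Rabs (event_pmf p (S m) a n)).
  rewrite Rabs_pos_eq by (apply event_pmf_nonneg; auto).
  unfold event_pmf. destruct Rle_dec; [lra|apply geo_sum_pmf_nonneg; auto].
- exists 1. apply is_series_geo_sum_pmf; auto.
Qed.

Lemma Series_ge_term (a : nat -> R) k :
  (forall n, 0 <= a n) -> ex_series a -> a k <= Series a.
Proof.
intros Ha [l Hl]. rewrite (is_series_unique _ _ Hl).
apply Rle_trans with (sum_f_R0 a k).
- destruct k as [|k]; simpl; [lra|]. pose proof (cond_pos_sum a k Ha). lra.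
- apply sum_incr; [apply is_series_Reals, Hl|exact Ha].
Qed.

Lemma geo_sum_pmf_le_prob p m a k : 0 < p < 1 -> INR k <= (1 - a) * INR (S m) ->
  geo_sum_pmf p (S m) k <= prob_sumY_ge p (S m) a.
Proof.
intros Hp Hk. unfold prob_sumY_ge. fold (event_pmf p (S m) a).
apply Rle_trans with (event_pmf p (S m) a k).
- unfold event_pmf. destruct Rle_dec as [|Hn]; [lra|]. exfalso. apply Hn. lra.
- apply Series_ge_term; [intro; apply event_pmf_nonneg; auto|apply ex_series_event_pmf; auto].
Qed.

Lemma pow_le_prob_sumY_ge p m a : 0 < p < 1 -> a <= 1 -> p ^ S m <= prob_sumY_ge p (S m) a.
Proof.
intros Hp Ha. rewrite <- geo_sum_pmf_S_0. apply geo_sum_pmf_le_prob; auto.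
simpl INR at 1. pose proof (pos_INR (S m)). nra.
Qed.

Lemma prob_sumY_ge_1 p m : 0 < p < 1 -> prob_sumY_ge p (S m) 1 = p ^ S m.
Proof.
intro Hp. unfold prob_sumY_ge. fold (event_pmf p (S m) 1).
rewrite Series_incr_1 by (apply ex_series_event_pmf; auto).
rewrite (Series_ext _ (fun n => 0 * event_pmf p (S m) 1 n)), Series_scal_l, Rmult_0_l, Rplus_0_r.
- unfold event_pmf. rewrite geo_sum_pmf_S_0. destruct Rle_dec as [|Hn]; [lra|].
  exfalso. apply Hn. change (INR 0) with 0. lra.
- intro n. rewrite Rmult_0_l. unfold event_pmf. destruct Rle_dec as [Hr|]; [|reflexivity].
  rewrite !S_INR in Hr. pose proof (pos_INR n). exfalso. lra.
Qed.

(* Chernoff's bound: on the event [G <= (1 - a) m] one has [1 <= x ^ (G - (1 - a) m)]. *)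
Lemma prob_sumY_ge_chernoff p m a x : 0 < p < 1 -> 0 < x <= 1 ->
  prob_sumY_ge p (S m) a
  <= exp (- ((1 - a) * INR (S m) * ln x)) * (p / (1 - (1 - p) * x)) ^ S m.
Proof.
intros Hp Hx. set (L := exp (- ((1 - a) * INR (S m) * ln x))).
pose proof (is_series_scal_l L _ _ (is_series_geo_sum_pmf_gf p m x Hp ltac:(lra))) as G.
change (scal L ((p / (1 - (1 - p) * x)) ^ S m)) with (L * (p / (1 - (1 - p) * x)) ^ S m) in G.
rewrite <- (is_series_unique _ _ G).
apply Series_le; [|eexists; exact G].
intro k. split; [apply event_pmf_nonneg; auto|].
assert (Hpmf : 0 <= geo_sum_pmf p (S m) k) by (apply geo_sum_pmf_nonneg; auto).
unfold event_pmf. destruct Rle_dec as [Hr|]; change (scal L ?u) with (L * u).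
- assert (HL : 1 <= L * x ^ k).
  { rewrite (pow_exp_ln x k) by lra. unfold L. rewrite <- exp_plus.
    assert (ln x <= 0) by (rewrite <- ln_1; apply ln_le; lra).
    pose proof (exp_ineq1_le (- ((1 - a) * INR (S m) * ln x) + INR k * ln x)). nra. }
  nra.
- apply Rmult_le_pos; [left; apply exp_pos|].
  apply Rmult_le_pos; [auto|apply pow_le; lra].
Qed.

Lemma exp_pow x n : exp x ^ n = exp (INR n * x).
Proof.
induction n as [|n IH]; [simpl; rewrite Rmult_0_l, exp_0; reflexivity|].
rewrite S_INR, <- tech_pow_Rmult, IH, <- exp_plus. f_equal. ring.
Qed.

Lemma exp_le x y : x <= y -> exp x <= exp y.
Proof. intros [H|H]; [left; apply exp_increasing; exact H|subst; lra]. Qed.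

Lemma ln_ge_0 x : 1 <= x -> 0 <= ln x.
Proof. intro H. rewrite <- ln_1. apply ln_le; lra. Qed.

Lemma ln_le_0 x : 0 < x <= 1 -> ln x <= 0.
Proof. intro H. rewrite <- ln_1. apply ln_le; lra. Qed.

Lemma ln_le_sub_1 x : 0 < x -> ln x <= x - 1.
Proof. intro H. pose proof (exp_ineq1_le (ln x)). rewrite exp_ln in *; lra. Qed.

(* [ln f] at [a = 1 - t]; at [t = 0] the junk value [ln 0 = 0] makes [t * ln t] vanish,
   matching the convention [0 ^ 0 = 1] in [fgeo]. *)
Definition geo_rate (p t : R) : R :=
  (1 + t) * ln (1 + t) - t * ln t + ln p + t * ln (1 - p).

Lemma fgeo_exp_rate p a : 0 < p < 1 -> a <= 1 -> fgeo p a = exp (geo_rate p (1 - a)).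
Proof.
intros Hp Ha. unfold fgeo, rpow0, geo_rate, Rpower.
replace (1 + (1 - a)) with (2 - a) by ring.
destruct (Req_EM_T (2 - a) 0); [lra|].
destruct (Req_EM_T (1 - p) 0); [lra|].
rewrite <- (exp_ln p) at 1 by lra.
destruct (Req_EM_T (1 - a) 0) as [E|E].
- destruct (Req_EM_T (a - 1) 0); [|lra].
  rewrite E, Rmult_1_r, <- !exp_plus. f_equal. ring.
- rewrite <- !exp_plus. f_equal. ring.
Qed.

Lemma geo_rate_0 p : geo_rate p 0 = ln p.
Proof. unfold geo_rate. rewrite Rplus_0_r, ln_1. ring. Qed.

Lemma geo_rate_mean p : 0 < p < 1 -> geo_rate p (/ p - 1) = 0.
Proof.
intro Hp. unfold geo_rate. replace (1 + (/ p - 1)) with (/ p) by ring.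
replace (/ p - 1) with ((1 - p) / p) by (field; lra).
rewrite ln_Rinv, ln_div by lra. field. lra.
Qed.

(* [x] minimises [x ^ (- b) * p / (1 - (1 - p) x)]. *)
Lemma chernoff_optimum p m b : 0 < p < 1 -> 0 < b ->
  let x := b / ((1 + b) * (1 - p)) in
  exp (- (b * INR m * ln x)) * (p / (1 - (1 - p) * x)) ^ m = exp (geo_rate p b) ^ m.
Proof.
intros Hp Hb x.
replace (p / (1 - (1 - p) * x)) with (p * (1 + b)) by (unfold x; field; lra).
rewrite (pow_exp_ln (p * (1 + b))), exp_pow, <- exp_plus by nra.
f_equal. unfold x, geo_rate. rewrite ln_div, !ln_mult by nra. ring.
Qed.

Lemma prob_sumY_ge_le_rate p m a : 0 < p < 1 -> 2 - / p <= a <= 1 ->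
  prob_sumY_ge p (S m) a <= exp (geo_rate p (1 - a)) ^ S m.
Proof.
intros Hp Ha. destruct (Req_dec a 1) as [->|Ha1].
- rewrite prob_sumY_ge_1, Rminus_diag, geo_rate_0, exp_ln by lra. lra.
- set (b := 1 - a).
  assert (Hb : 0 < b) by (unfold b; lra).
  assert (Hbp : b * p <= 1 - p).
  { assert (p * / p = 1) by (field; lra). unfold b; nra. }
  rewrite <- (chernoff_optimum p (S m) b Hp Hb).
  apply prob_sumY_ge_chernoff; auto. split.
  + apply Rdiv_lt_0_compat; nra.
  + apply Rmult_le_reg_r with ((1 + b) * (1 - p)); [nra|].
    unfold Rdiv. rewrite Rmult_assoc, Rinv_l by nra. nra.
Qed.

Section BinomialMaxTerm.
Variables n k : nat.
Hypothesis Hkn : (k < n)%nat.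
Let x := INR k.
Let y := INR (n - k).
Let term j := binom n j * x ^ j * y ^ (n - j).

Lemma term_nonneg j : 0 <= term j.
Proof. unfold term. pose proof (binom_pos n j). pose proof (pos_INR k).
pose proof (pos_INR (n - k)). apply Rmult_le_pos; [apply Rmult_le_pos|]; try apply pow_le; auto.
Qed.

Lemma term_succ j : (j < n)%nat -> term (S j) * INR (S j) * y = term j * INR (n - j) * x.
Proof.
intro Hj. unfold term. rewrite pascal_step3 by auto.
replace (n - j)%nat with (S (n - S j)) by lia. simpl pow.
replace (S (n - S j)) with (n - j)%nat by lia.
assert (INR (S j) <> 0) by (apply not_0_INR; lia).
field; auto.
Qed.

Lemma term_le_left d : (d <= k)%nat -> term (k - d) <= term k.
Proof.
induction d as [|d IH]; intro Hd; [rewrite Nat.sub_0_r; lra|].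
enough (term (k - S d) <= term (k - d)) by (specialize (IH ltac:(lia)); lra).
pose proof (term_succ (k - S d) ltac:(lia)) as R.
replace (S (k - S d)) with (k - d)%nat in R by lia.
pose proof (term_nonneg (k - S d)). pose proof (term_nonneg (k - d)).
assert (Hy : 0 < y) by (unfold y; apply lt_0_INR; lia).
assert (Hc : INR (k - d) * y <= INR (n - (k - S d)) * x).
{ unfold y, x. rewrite <- !mult_INR. apply le_INR. nia. }
assert (0 < INR (k - d) * y) by (apply Rmult_lt_0_compat; auto; apply lt_0_INR; lia).
nra.
Qed.

Lemma term_le_right d : (k + d <= n)%nat -> term (k + d) <= term k.
Proof.
induction d as [|d IH]; intro Hd; [rewrite Nat.add_0_r; lra|].
enough (term (k + S d) <= term (k + d)) by (specialize (IH ltac:(lia)); lra).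
pose proof (term_succ (k + d) ltac:(lia)) as R.
replace (S (k + d)) with (k + S d)%nat in R by lia.
pose proof (term_nonneg (k + S d)). pose proof (term_nonneg (k + d)).
assert (Hy : 0 < y) by (unfold y; apply lt_0_INR; lia).
assert (Hc : INR (n - (k + d)) * x <= INR (k + S d) * y).
{ unfold y, x. rewrite <- !mult_INR. apply le_INR. nia. }
assert (0 < INR (k + S d) * y) by (apply Rmult_lt_0_compat; auto; apply lt_0_INR; lia).
nra.
Qed.

(* The [k]-th term is the largest in the binomial expansion of [(k + (n - k)) ^ n]. *)
Lemma pow_le_binom_max_term :
  INR n ^ n <= INR (S n) * (binom n k * INR k ^ k * INR (n - k) ^ (n - k)).
Proof.
replace (INR n) with (x + y) at 1 by (unfold x, y; rewrite <- plus_INR; f_equal; lia).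
rewrite binomial. change (binom n k * INR k ^ k * INR (n - k) ^ (n - k)) with (term k).
rewrite Rmult_comm, <- sum_cte. apply sum_Rle. intros j Hj.
change (binom n j * x ^ j * y ^ (n - j)) with (term j).
destruct (Compare_dec.le_lt_dec j k).
- replace j with (k - (k - j))%nat by lia. apply term_le_left. lia.
- replace j with (k + (j - k))%nat by lia. apply term_le_right. lia.
Qed.
End BinomialMaxTerm.

Lemma binom_add_S k m :
  binom (k + m) k * INR (k + S m) = binom (k + S m) k * INR (S m).
Proof.
unfold Binomial.C.
replace (k + m - k)%nat with m by lia.
replace (k + S m - k)%nat with (S m) by lia.
replace (k + S m)%nat with (S (k + m)) by lia.
change (Factorial.fact (S (k + m))) with (S (k + m) * Factorial.fact (k + m))%nat.
change (Factorial.fact (S m)) with (S m * Factorial.fact m)%nat.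
rewrite !mult_INR.
pose proof (INR_fact_lt_0 k). pose proof (INR_fact_lt_0 m). pose proof (INR_fact_lt_0 (k + m)).
assert (INR (S m) <> 0) by (apply not_0_INR; lia).
field. repeat split; lra.
Qed.

Lemma binom_ge_entropy k m : (k <= S m)%nat ->
  INR (k + S m) ^ (k + S m) / (INR k ^ k * INR (S m) ^ S m) / (6 * INR (S m))
  <= binom (k + m) k.
Proof.
intro Hk. set (n := (k + S m)%nat). set (N := INR n). set (M := INR (S m)).
pose proof (pow_le_binom_max_term n k ltac:(unfold n; lia)) as Hmax.
replace (n - k)%nat with (S m) in Hmax by (unfold n; lia).
rewrite S_INR in Hmax. fold N M in Hmax.
assert (HM : 1 <= M) by (apply (le_INR 1); lia).
assert (HN : N = INR k + M) by apply plus_INR.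
assert (HkM : 0 <= INR k <= M) by (split; [apply pos_INR|apply le_INR; auto]).
assert (Hkk : 0 < INR k ^ k) by (destruct k; [simpl; lra|apply pow_lt, lt_0_INR; lia]).
assert (HMM : 0 < M ^ S m) by (apply pow_lt; lra).
set (D := binom n k * INR k ^ k * M ^ S m) in Hmax.
assert (HD : 0 <= D).
{ pose proof (binom_pos n k). unfold D. apply Rmult_le_pos; [apply Rmult_le_pos|]; lra. }
assert (Hbinom : binom (k + m) k = D / (INR k ^ k * M ^ S m) * M / N).
{ pose proof (binom_add_S k m) as H. fold n N M in H. unfold D.
  apply Rmult_eq_reg_r with N; [|lra]. rewrite H. field. repeat split; lra. }
rewrite Hbinom. unfold Rdiv.
rewrite !(Rmult_comm _ (/ (INR k ^ k * M ^ S m))), !Rmult_assoc.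
apply Rmult_le_compat_l; [apply Rlt_le, Rinv_0_lt_compat; nra|].
apply Rmult_le_reg_r with (6 * M * N); [nra|].
match goal with |- ?l <= ?r =>
  replace l with (N ^ n * N) by (field; lra);
  replace r with (D * (6 * M * M)) by (field; lra) end.
apply Rle_trans with ((N + 1) * D * N); [nra|].
assert ((N + 1) * N <= 6 * M * M) by nra. nra.
Qed.

Lemma pow_INR_self n : INR n ^ n = exp (INR n * ln (INR n)).
Proof.
destruct n as [|n]; [simpl; rewrite Rmult_0_l, exp_0; reflexivity|].
apply pow_exp_ln, lt_0_INR. lia.
Qed.

Lemma exp_rate_nat p k m : 0 < p < 1 -> (0 < m)%nat ->
  exp (INR m * geo_rate p (INR k / INR m))
  = INR (k + m) ^ (k + m) / (INR k ^ k * INR m ^ m) * p ^ m * (1 - p) ^ k.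
Proof.
intros Hp Hm.
assert (HM : 0 < INR m) by (apply lt_0_INR; auto).
assert (HN : INR (k + m) = INR k + INR m) by apply plus_INR.
rewrite !pow_INR_self, (pow_exp_ln p), (pow_exp_ln (1 - p)) by lra.
unfold Rdiv. rewrite <- exp_plus, <- exp_Ropp, <- !exp_plus. f_equal.
unfold geo_rate.
replace (1 + INR k * / INR m) with (INR (k + m) / INR m) by (rewrite HN; field; lra).
rewrite ln_div by (rewrite ?HN; pose proof (pos_INR k); lra).
destruct (Req_dec (INR k) 0) as [Z|Z].
- rewrite Z, HN, Z, Rplus_0_l, Rmult_0_l. ring.
- rewrite ln_mult, ln_Rinv by (pose proof (pos_INR k); try apply Rinv_0_lt_compat; lra).
  rewrite HN. field. lra.
Qed.

Lemma geo_sum_pmf_ge_rate p m k : 0 < p < 1 -> (k <= S m)%nat ->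
  exp (INR (S m) * geo_rate p (INR k / INR (S m))) / (6 * INR (S m))
  <= geo_sum_pmf p (S m) k.
Proof.
intros Hp Hk. rewrite geo_sum_pmf_S, exp_rate_nat by (auto; lia).
assert (0 < INR k ^ k) by (destruct k; [simpl; lra|apply pow_lt, lt_0_INR; lia]).
assert (0 < p ^ S m) by (apply pow_lt; lra).
assert (0 < (1 - p) ^ k) by (apply pow_lt; lra).
assert (0 < INR (S m)) by (apply lt_0_INR; lia).
assert (0 < INR (S m) ^ S m) by (apply pow_lt; lra).
match goal with |- ?A / ?B * ?P * ?Q / ?E <= _ =>
  replace (A / B * P * Q / E) with (A / B / E * P * Q)
    by (field; repeat split; apply Rgt_not_eq; lra) end.
apply Rmult_le_compat_r; [lra|]. apply Rmult_le_compat_r; [lra|].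
apply binom_ge_entropy; auto.
Qed.

Lemma x_ln_x_ge x : 0 <= x -> x - 1 <= x * ln x.
Proof.
intro Hx. destruct (Req_dec x 0) as [->|Hx0]; [rewrite Rmult_0_l; lra|].
pose proof (ln_le_sub_1 (/ x) ltac:(apply Rinv_0_lt_compat; lra)) as H.
rewrite ln_Rinv in H by lra.
assert (x * / x = 1) by (field; lra). nra.
Qed.

Lemma neg_x_ln_x_le M b : 1 <= M -> 0 < b <= / M -> - (b * ln b) <= (1 + ln M) / M.
Proof.
intros HM Hb.
assert (HMb : M * b <= 1).
{ apply Rmult_le_reg_l with (/ M); [apply Rinv_0_lt_compat; lra|].
  rewrite <- Rmult_assoc, Rinv_l, Rmult_1_l, Rmult_1_r by lra. lra. }
pose proof (x_ln_x_ge (M * b) ltac:(nra)) as H.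
rewrite ln_mult in H by nra. pose proof (ln_ge_0 M HM).
apply Rmult_le_reg_r with M; [lra|].
unfold Rdiv. rewrite Rmult_assoc, Rinv_l, Rmult_1_r by lra. nra.
Qed.

Lemma x_ln_x_sub_le M b c : 1 <= M -> 0 <= c <= b -> b <= 1 -> b - c <= / M ->
  c * ln c - b * ln b <= (1 + ln M) / M.
Proof.
intros HM Hc Hb Hd. pose proof (ln_ge_0 M HM).
assert (0 <= (1 + ln M) / M) by (apply Rdiv_le_0_compat; lra).
destruct (Req_dec b 0) as [Hb0|Hb0].
{ replace c with 0 by lra. rewrite Hb0, !Rmult_0_l. lra. }
pose proof (ln_le_0 b ltac:(lra)).
destruct (Req_dec c 0) as [->|Hc0].
{ rewrite Rmult_0_l. pose proof (neg_x_ln_x_le M b HM ltac:(lra)). lra. }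
assert (ln c <= ln b) by (apply ln_le; lra).
replace (c * ln c - b * ln b) with (c * (ln c - ln b) + (b - c) * (- ln b)) by ring.
assert (c * (ln c - ln b) <= 0) by nra.
destruct (Rle_lt_dec (/ M) b) as [Hbig|Hsmall].
- assert (- ln b <= ln M).
  { assert (ln (/ M) <= ln b) by (apply ln_le; [apply Rinv_0_lt_compat|]; lra).
    rewrite ln_Rinv in *; lra. }
  assert ((b - c) * (- ln b) <= / M * ln M) by nra.
  unfold Rdiv. nra.
- pose proof (neg_x_ln_x_le M b HM ltac:(lra)). nra.
Qed.

Lemma one_plus_x_ln_sub_le b c : 0 <= c <= b -> b <= 1 ->
  (1 + b) * ln (1 + b) - (1 + c) * ln (1 + c) <= 2 * (b - c).
Proof.
intros Hc Hb.
pose proof (ln_le_sub_1 (1 + b) ltac:(lra)).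
pose proof (ln_le_sub_1 ((1 + b) / (1 + c)) ltac:(apply Rdiv_lt_0_compat; lra)) as Hq.
rewrite ln_div in Hq by lra.
assert ((1 + c) * (ln (1 + b) - ln (1 + c)) <= b - c).
{ replace (b - c) with ((1 + c) * ((1 + b) / (1 + c) - 1)) by (field; lra).
  apply Rmult_le_compat_l; lra. }
nra.
Qed.

(* [geo_rate p] is Lipschitz up to the [t ln t] term, whose modulus is [O(ln M / M)]. *)
Lemma geo_rate_sub_le p M b c : 0 < p < 1 -> 1 <= M -> 0 <= c <= b -> b <= 1 ->
  b - c <= / M -> M * (geo_rate p b - geo_rate p c) <= 3 + ln M.
Proof.
intros Hp HM Hc Hb Hd.
assert (/ M <= 1) by (rewrite <- Rinv_1; apply Rinv_le_contravar; lra).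
pose proof (one_plus_x_ln_sub_le b c Hc Hb).
pose proof (x_ln_x_sub_le M b c HM Hc Hb Hd).
pose proof (ln_le_0 (1 - p) ltac:(lra)).
assert (geo_rate p b - geo_rate p c <= 2 * / M + (1 + ln M) / M) by (unfold geo_rate; nra).
apply Rle_trans with (M * (2 * / M + (1 + ln M) / M)); [apply Rmult_le_compat_l; lra|].
right. field. lra.
Qed.

Lemma geo_rate_le_3 p b : 0 < p < 1 -> 0 <= b <= 1 -> geo_rate p b <= 3.
Proof.
intros Hp Hb. unfold geo_rate.
pose proof (ln_le_sub_1 (1 + b) ltac:(lra)).
pose proof (ln_ge_0 (1 + b) ltac:(lra)).
pose proof (ln_le_0 p ltac:(lra)).
pose proof (ln_le_0 (1 - p) ltac:(lra)).
pose proof (x_ln_x_ge b ltac:(lra)).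
nra.
Qed.

Lemma prob_sumY_ge_ge_rate p m a b : 0 < p < 1 -> 0 <= b <= 1 -> b <= 1 - a ->
  exp (geo_rate p b) ^ S m / (6 * INR (S m) ^ 2 * exp 3) <= prob_sumY_ge p (S m) a.
Proof.
intros Hp Hb Hba. set (M := INR (S m)).
assert (HM : 1 <= M) by (apply (le_INR 1); lia).
destruct (nfloor_ex (b * M) ltac:(nra)) as [k [Hk1 Hk2]].
assert (Hkm : (k <= S m)%nat) by (apply INR_le; fold M; nra).
eapply Rle_trans; [|apply (geo_sum_pmf_le_prob p m a k Hp); fold M; nra].
eapply Rle_trans; [|apply geo_sum_pmf_ge_rate; auto]. fold M.
set (c := INR k / M).
assert (Hkc : INR k = c * M) by (unfold c; field; lra).
assert (Hc : 0 <= c <= b) by (pose proof (pos_INR k); split; nra).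
assert (Hd : b - c <= / M).
{ apply Rmult_le_reg_r with M; [lra|]. rewrite Rinv_l by lra. nra. }
pose proof (geo_rate_sub_le p M b c Hp HM Hc (proj2 Hb) Hd).
rewrite exp_pow. fold M.
replace (exp (M * geo_rate p b) / (6 * M ^ 2 * exp 3))
  with (exp (M * geo_rate p b - (3 + ln M)) / (6 * M)).
- unfold Rdiv. apply Rmult_le_compat_r; [apply Rlt_le, Rinv_0_lt_compat; lra|].
  apply exp_le. lra.
- unfold Rminus. rewrite exp_plus, exp_Ropp, exp_plus, exp_ln by lra.
  field. pose proof (exp_pos 3). repeat split; lra.
Qed.

Lemma pow_sub_le F K q P m t : (0 < m)%nat -> 0 < F <= K -> 0 < q -> 0 <= t -> K * t <= q ->
  q ^ m <= P -> F ^ m * exp (- (INR m * t)) <= P -> (F - K * t) ^ m <= P.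
Proof.
intros Hm HF Hq Ht HKt Hqm HFm.
destruct (Rle_lt_dec (F - K * t) 0) as [Hneg|Hpos].
- eapply Rle_trans; [apply Rle_abs|]. rewrite <- RPow_abs.
  eapply Rle_trans; [|apply Hqm]. apply pow_incr. split; [apply Rabs_pos|].
  rewrite Rabs_left1 by lra. nra.
- assert (H1 : F - K * t <= F * (1 - t)) by nra.
  eapply Rle_trans; [apply pow_incr; split; [lra|exact H1]|].
  rewrite Rpow_mult_distr.
  eapply Rle_trans; [|apply HFm]. apply Rmult_le_compat_l; [apply pow_le; lra|].
  replace (- (INR m * t)) with (INR m * - t) by ring.
  rewrite <- exp_pow. apply pow_incr. split; [nra|].
  pose proof (exp_ineq1_le (- t)). lra.
Qed.

(* [exp (- m * lb_slack m) = 1 / (6 m^2 e^3)] is the loss in [prob_sumY_ge_ge_rate]. *)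
Definition lb_slack (m : nat) : R := ln (6 * INR m ^ 2 * exp 3) / INR m.

Lemma lb_slack_cv : is_lim_seq lb_slack 0.
Proof.
apply is_lim_seq_ext_loc with (fun m => (ln 6 + 3) * / INR m + 2 * (ln (INR m) / INR m)).
- exists 1%nat. intros m Hm.
  assert (0 < INR m) by (apply lt_0_INR; lia).
  assert (0 < INR m ^ 2) by (apply pow_lt; lra).
  unfold lb_slack. rewrite !ln_mult, ln_pow, ln_exp by (try apply exp_pos; nra).
  replace (INR 2) with 2 by (simpl; ring). field. lra.
- replace (Finite 0) with (Finite ((ln 6 + 3) * 0 + 2 * 0)) by (f_equal; ring).
  apply is_lim_seq_plus'; apply is_lim_seq_mult'; try apply is_lim_seq_const.
  + exact (is_lim_seq_inv INR p_infty is_lim_seq_INR ltac:(discriminate)).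
  + apply (is_lim_comp_seq (fun y => ln y / y) INR p_infty 0 is_lim_div_ln_p).
    * exists 0%nat. intros. discriminate.
    * exact is_lim_seq_INR.
Qed.

Lemma lb_eps_cv : Un_cv (fun m => exp 3 * lb_slack m) 0.
Proof.
apply is_lim_seq_Reals. replace 0 with (exp 3 * 0) by ring.
apply is_lim_seq_mult'; [apply is_lim_seq_const|exact lb_slack_cv].
Qed.

Lemma prob_sumY_ge_lower p : 0 < p < 1 ->
  exists M, forall m, (M <= m)%nat -> forall a b, 0 <= b <= 1 -> b <= 1 - a ->
    (exp (geo_rate p b) - exp 3 * lb_slack m) ^ m <= prob_sumY_ge p m a.
Proof.
intros Hp. destruct (lb_eps_cv p ltac:(lra)) as [N HN].
exists (S N). intros m Hm a b Hb Hba. destruct m as [|m]; [lia|].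
specialize (HN (S m) ltac:(lia)). unfold R_dist in HN. rewrite Rminus_0_r in HN.
pose proof (Rle_abs (exp 3 * lb_slack (S m))).
assert (HM : 1 <= INR (S m)) by (apply (le_INR 1); lia).
assert (H6 : 1 <= 6 * INR (S m) ^ 2 * exp 3).
{ pose proof (exp_ineq1_le 3). rewrite <- Rmult_1_r at 1. nra. }
apply pow_sub_le with p; try lia; try lra.
- split; [apply exp_pos|]. apply exp_le, geo_rate_le_3; auto.
- unfold lb_slack. apply Rdiv_le_0_compat; [apply ln_ge_0; auto|lra].
- apply pow_le_prob_sumY_ge; auto. lra.
- replace (INR (S m) * lb_slack (S m)) with (ln (6 * INR (S m) ^ 2 * exp 3))
    by (unfold lb_slack; field; lra).
  rewrite exp_Ropp, exp_ln by lra. apply prob_sumY_ge_ge_rate; auto.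
Qed.

Theorem lemma13 :
  (exists C : R, forall p : R, 0 < p < 1 ->
     forall a : R, 2 - / p <= a <= 1 ->
     forall m : nat, (1 <= m)%nat ->
       prob_sumY_ge p m a <= C * INR m * fgeo p a ^ m)
  /\
  (forall p : R, 0 < p < 1 ->
     exists eps : nat -> R, Un_cv eps 0 /\
       exists M : nat, forall m : nat, (M <= m)%nat ->
         forall a : R, 0 <= a <= 1 ->
           (fgeo p a - eps m) ^ m <= prob_sumY_ge p m a)
  /\
  (forall p : R, 1 / 2 <= p < 1 ->
     exists eps : nat -> R, Un_cv eps 0 /\
       exists M : nat, forall m : nat, (M <= m)%nat ->
         forall a : R, 0 <= a <= 2 - / p ->
           (1 - eps m) ^ m <= prob_sumY_ge p m a).
Proof.
split; [|split].
- exists 1. intros p Hp a Ha m Hm. destruct m as [|m]; [lia|].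
  rewrite fgeo_exp_rate by (auto; lra).
  eapply Rle_trans; [apply prob_sumY_ge_le_rate; auto|].
  assert (1 <= INR (S m)) by (apply (le_INR 1); lia).
  assert (0 <= exp (geo_rate p (1 - a)) ^ S m) by (apply pow_le; left; apply exp_pos).
  nra.
- intros p Hp. exists (fun m => exp 3 * lb_slack m). split; [exact lb_eps_cv|].
  destruct (prob_sumY_ge_lower p Hp) as [M HM]. exists M. intros m Hm a Ha.
  rewrite fgeo_exp_rate by (auto; lra). apply HM; auto; lra.
- intros p Hp. exists (fun m => exp 3 * lb_slack m). split; [exact lb_eps_cv|].
  destruct (prob_sumY_ge_lower p ltac:(lra)) as [M HM]. exists M. intros m Hm a Ha.
  assert (p * / p = 1) by (field; lra).
  rewrite <- exp_0, <- (geo_rate_mean p) by lra.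
  apply HM; [auto|split|]; nra.
Qed.
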